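(* Fix $\tau\in(0,1)$ and consider the moment function $\rho(y,q)=\tau-\mathbb I[y\le q]$ ($m=0$), so that $q_a^*(x;\tau)$, the $\tau$-quantile of $Y\mid X=x,A=a$, plays the role of $\kappa_a^*$ and the CDTE is the conditional quantile treatment effect $\mathrm{CQTE}(x;\tau)=q_1^*(x;\tau)-q_0^*(x;\tau)$. Assume the conditional distributions of $Y$ given $X=x,A=a$ are continuous. Then the general pseudo-outcome (defined in the context) specializes to $$\psi^{\mathrm{CQTE}}(Z,e,q,f)=q_1(X;\tau)-q_0(X;\tau)+\frac{A-e(X)}{e(X)(1-e(X))}\,\frac{1}{f_A(X)}\big(\tau-\mathbb I[Y\le q_A(X;\tau)]\big),$$ where $f_a$ is a stand-in for $f_a^*(x)=f_{Y\mid X=x,A=a}(q_a^*(x;\tau))$, the conditional density of $Y$ given $X=x,A=a$ evaluated at the conditional quantile. Furthermore, if the Boundedness Assumption (in the context) holds and the cross-fitted nuisance estimates $(\hat e^{(k)},\hat q^{(k)},\hat f^{(k)})$ lie in $\Xi$, then $$\mathcal E\lesssim\sum_{k=1}^K\sum_{a=0}^1\|\hat q_a^{(k)}-q_a^*\|\Big(\|\hat e^{(k)}-e^*\|+\Big\|\frac{1}{\hat f^{(k)}_a}-\frac{1}{f^*_a}\Big\|+\|\hat q^{(k)}_a-q^*_a\|\Big).$$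
   Context: $Z=(X,A,Y)$ with $X\in\mathcal X$, $A\in\{0,1\}$, $Y\in\mathbb R$, $e^*(x)=P(A=1\mid X=x)$; $\|g\|=\mathbb E[g^2]^{1/2}$. $D$ denotes directional derivatives. General setting: for a moment function $\rho:\mathbb R\times\mathbb R^{m+1}\to\mathbb R^{m+1}$, $\rho(y,\nu)$ with $\nu=(\kappa,h)$, $\nu_a^*(x)=(\kappa_a^*(x),h_a^*(x))$ solves $\mathbb E[\rho(Y,\nu)\mid X=x,A=a]=0$; $J_a^*(x)=D_\nu\{\mathbb E[\rho(Y,\nu)\mid X=x,A=a]\}|_{\nu=\nu_a^*(x)}$ (assumed invertible) and $\alpha_a^*(x)$ is the first row of $J_a^*(x)^{-1}$. The pseudo-outcome for stand-ins $(e,\alpha,\nu)$ is $\psi(Z,e,\alpha,\nu)=\kappa_1(X)-\kappa_0(X)-\frac{A-e(X)}{e(X)(1-e(X))}\alpha_A(X)^T\rho(Y,\nu_A(X))$. Cross-fitting: given $n$ i.i.d. copies of $Z$, $K\ge2$ folds $I_k=\{i:i\equiv k-1\pmod K\}$, nuisance estimates $(\hat e^{(k)},\hat\alpha^{(k)},\hat\nu^{(k)})$ built from data outside $I_k$. $\mathcal E=\sum_{k=1}^K\mathcal E(\hat e^{(k)},\hat\alpha^{(k)},\hat\nu^{(k)})$, where $\mathcal E(e,\alpha,\nu)=\sum_{a=0}^1\big(\|\kappa_a-\kappa_a^*\|\|e-e^*\|+\sum_{i,j}G_{ij}\|\alpha_{a,i}-\alpha^*_{a,i}\|\|\nu_{a,j}-\nu^*_{a,j}\|+\sum_{i,j}H_{ij}\|\nu_{a,i}-\nu^*_{a,i}\|\|\nu_{a,j}-\nu^*_{a,j}\|\big)$.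 Boundedness Assumption: for a set $\Xi$ of nuisance realizations, there exist $c_1>0,c_2\ge0,c_3\ge0,c_4>0,c_5\ge0$ and $G,H\in\{0,1\}^{(m+1)\times(m+1)}$ such that for all $(e,\alpha,\nu)\in\Xi$, $a$, $i,j,l$, and $\bar\nu_a$ in the convex hull of $\{\nu_a^*,\nu_a\}$: $e^*(X),e(X)\in[c_1,1-c_1]$; $|D_{\nu_{a,j}}\mathbb E[\rho_i(Y,\nu_a)\mid X,A=a]|_{\nu_a=\bar\nu_a}|\le c_2G_{ij}$; $|D_{\nu_{a,l}}D_{\nu_{a,j}}\mathbb E[\rho_i(Y,\nu_a)\mid X=x,A=a]|_{\nu_a=\bar\nu_a}|\le c_3H_{jl}$; $\det(D_{\nu_a}\{\mathbb E[\rho(Y,\nu_a)\mid X=x,A=a]\}|_{\nu_a=\bar\nu_a})>c_4$; $|\rho_i(Y,\bar\nu_a)|\le c_5$. *)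

From mathcomp Require Import all_boot all_order all_algebra.
From mathcomp Require Import all_classical all_reals all_analysis.
Import Order.TTheory GRing.Theory Num.Theory.
Import numFieldNormedType.Exports.

Set Implicit Arguments.
Unset Strict Implicit.
Unset Printing Implicit Defensive.

Local Open Scope classical_set_scope.
Local Open Scope ring_scope.

Section CQTE.
Context {R : realType}.

Definition rho_q (tau y q : R) : R := tau - ((y <= q)%R)%:R.

Context {d : measure_display} {X : measurableType d}.

(* The law of Z = (X,A,Y) is parametrized by the law PX of X, the
   propensity e*(x) = P(A=1|X=x), and the conditional laws
   mu a x = law of Y given X = x, A = a. *)

Definition condmom (mu : bool -> X -> probability R R) (tau : R)
  (a : bool) (x : X) (q : R) : R :=
  fine (\int[mu a x]_y (rho_q tau y q)%:E)%E.

Definition cond_cdf (mu : bool -> X -> probability R R) (a : bool) (x : X)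
  (q : R) : R := fine (mu a x [set y : R | y <= q]).

Definition Jstar (mu : bool -> X -> probability R R) (tau : R)
  (nustar : bool -> X -> R) (a : bool) (x : X) : R :=
  derive1 (condmom mu tau a x) (nustar a x).

(* alpha*_a(x) = first row of J*_a(x)^{-1}; for m = 0 this is 1 / J*_a(x) *)
Definition alpha_star (mu : bool -> X -> probability R R) (tau : R)
  (nustar : bool -> X -> R) (a : bool) (x : X) : R :=
  (Jstar mu tau nustar a x)^-1.

Definition f_star (mu : bool -> X -> probability R R)
  (qstar : bool -> X -> R) (a : bool) (x : X) : R :=
  derive1 (cond_cdf mu a x) (qstar a x).

(* General pseudo-outcome psi(Z, e, alpha, nu) for m = 0 (kappa = nu). *)
Definition psi (tau : R) (e : X -> R) (alpha nu : bool -> X -> R)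
  (z : X * bool * R) : R :=
  let: (x, a, y) := z in
  nu true x - nu false x
  - (a%:R - e x) / (e x * (1 - e x)) * alpha a x * rho_q tau y (nu a x).

Definition psi_cqte (tau : R) (e : X -> R) (q f : bool -> X -> R)
  (z : X * bool * R) : R :=
  let: (x, a, y) := z in
  q true x - q false x
  + (a%:R - e x) / (e x * (1 - e x)) * (f a x)^-1 * rho_q tau y (q a x).

Definition L2 (PX : probability X R) (g : X -> R) : \bar R :=
  Lnorm PX 2%:E (EFin \o g).

Definition nuis_err (PX : probability X R) (G H : bool)
  (estar : X -> R) (alphastar nustar : bool -> X -> R)
  (e : X -> R) (alpha nu : bool -> X -> R) : \bar R :=
  (\sum_(a : bool)
     (L2 PX (nu a \- nustar a)%R * L2 PX (e \- estar)%R
      + (G%:R)%:E * L2 PX (alpha a \- alphastar a)%R * L2 PX (nu a \- nustar a)%R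
      + (H%:R)%:E * L2 PX (nu a \- nustar a)%R * L2 PX (nu a \- nustar a)%R))%E.

(* Boundedness Assumption for m = 0 on a set Xi of nuisance realizations
   (e, alpha, nu), with constants c1..c5 and G, H in {0,1}.  The determinant
   condition is read as |det| > c4. *)
Definition boundedness (mu : bool -> X -> probability R R) (tau : R)
  (estar : X -> R) (nustar : bool -> X -> R)
  (Xi : set ((X -> R) * (bool -> X -> R) * (bool -> X -> R)))
  (c1 c2 c3 c4 c5 : R) (G H : bool) : Prop :=
  [/\ 0 < c1, 0 <= c2, 0 <= c3, 0 < c4 & 0 <= c5] /\
  forall e alpha nu, Xi (e, alpha, nu) ->
  forall (a : bool) (x : X),
    (c1 <= estar x <= 1 - c1) /\ (c1 <= e x <= 1 - c1) /\
    forall t : R, 0 <= t <= 1 ->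
    forall nb : R, nb = (1 - t) * nustar a x + t * nu a x ->
      [/\ derivable (condmom mu tau a x) nb 1,
          `|derive1 (condmom mu tau a x) nb| <= c2 * G%:R,
          derivable (derive1 (condmom mu tau a x)) nb 1 &
          `|derive1 (derive1 (condmom mu tau a x)) nb| <= c3 * H%:R] /\
      c4 < `|derive1 (condmom mu tau a x) nb| /\
      (forall y : R, `|rho_q tau y nb| <= c5).

End CQTE.

(* For the quantile moment rho(y, q) = tau - 1[y <= q] the conditional moment
   is tau - F_{Y|X,A}(q), so J* = -f* and alpha* = -1/f*; substituting this
   into the general pseudo-outcome gives psi^CQTE.  In the error functional
   the nuisance alpha = -1/f differs from alpha* by the negative of
   1/f - 1/f*, and since G, H are 0 or 1 each summand is at most ||q - q*||
   times ||e - e*|| + ||1/f - 1/f*|| + ||q - q*||.  So the bound holds with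
   C = 1 and does not need the constants of the Boundedness Assumption. *)
From mathcomp Require Import all_boot all_order all_algebra.
From mathcomp Require Import all_classical all_reals all_analysis.
Import Order.TTheory GRing.Theory Num.Theory.
Import numFieldNormedType.Exports.
Local Open Scope classical_set_scope.
Local Open Scope ring_scope.

Lemma integral_rho_q (R : realType) (P : probability R R) (tau q : R) :
  (\int[P]_y (rho_q tau y q)%:E = (tau - fine (P [set y | y <= q]))%:E)%E.
Proof.
have mle : measurable [set y : R | y <= q].
  by have := @measurable_itv R `]-oo, q]; congr measurable.
have -> : (fun y => (rho_q tau y q)%:E) =
          (fun y => (cst tau y)%:E - (\1_[set y | y <= q] y)%:E)%E.
  by apply: funext => y; rewrite /rho_q indicE mem_setE EFinB.
rewrite integralB_EFin //; last 2 first.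
- exact: finite_measure_integrable_cst.
- exact: integrable_indic.
rewrite (integral_cst _ _ tau%:E) //.
rewrite [X in (_ * X)%E](_ : _ = 1%E); last exact: probability_setT.
rewrite mule1 integral_indic // setIT.
by rewrite EFinB fineK ?fin_num_measure.
Qed.

Section QuantileMoment.
Context {R : realType} {d : measure_display} {X : measurableType d}.
Variables (mu : bool -> X -> probability R R) (tau : R).

Lemma condmomE a x q : condmom mu tau a x q = tau - cond_cdf mu a x q.
Proof. by rewrite /condmom integral_rho_q. Qed.

Lemma cond_cdfE a x : cond_cdf mu a x = cst tau - condmom mu tau a x.
Proof. by apply: funext => q; rewrite !fctE condmomE opprB addrC subrK. Qed.

Lemma f_starE (qstar : bool -> X -> R) a x :
  derivable (condmom mu tau a x) (qstar a x) 1 ->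
  f_star mu qstar a x = - Jstar mu tau qstar a x.
Proof.
move=> dcm; rewrite /f_star /Jstar cond_cdfE !derive1E.
by rewrite deriveB ?derive_cst ?sub0r //; exact: derivable_cst.
Qed.

Lemma alpha_starE (qstar : bool -> X -> R) a x :
  derivable (condmom mu tau a x) (qstar a x) 1 ->
  alpha_star mu tau qstar a x = - (f_star mu qstar a x)^-1.
Proof. by move=> dcm; rewrite f_starE // invrN opprK. Qed.

End QuantileMoment.

Lemma psi_quantileE (R : realType) (d : measure_display) (X : measurableType d)
    (tau : R) (e : X -> R) (q f : bool -> X -> R) (z : X * bool * R) :
  psi tau e (fun a x => - (f a x)^-1) q z = psi_cqte tau e q f z.
Proof. by case: z => [[x a] y]; rewrite /psi /psi_cqte mulrN mulNr opprK. Qed.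

Section ErrorFunctional.
Context {R : realType} {d : measure_display} {X : measurableType d}.
Variable PX : probability X R.

Lemma L2N (g : X -> R) : L2 PX (\- g) = L2 PX g.
Proof.
by rewrite /L2 -[RHS]oppe_Lnorm; congr Lnorm; apply/funext => x /=; rewrite EFinN.
Qed.

Lemma nuis_err_le (G H : bool) (estar : X -> R) (alphastar nustar : bool -> X -> R)
    (e : X -> R) (alpha nu : bool -> X -> R) :
  (nuis_err PX G H estar alphastar nustar e alpha nu <=
   \sum_(a : bool) L2 PX (nu a \- nustar a)%R *
     (L2 PX (e \- estar)%R + L2 PX (alpha a \- alphastar a)%R
      + L2 PX (nu a \- nustar a)%R))%E.
Proof.
apply: lee_sum => a _.
have L2_ge0 g : (0 <= L2 PX g)%E by exact: Lnorm_ge0.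
rewrite !ge0_muleDr ?adde_ge0 //.
apply: leeD; first apply: leeD => //.
- by case: G; [rewrite mul1e muleC | rewrite !mul0e mule_ge0].
- by case: H; [rewrite mul1e | rewrite !mul0e mule_ge0].
Qed.

End ErrorFunctional.

Theorem corollary1 (R : realType) (tau : R) (htau : 0 < tau < 1) :
  exists C : R, 0 < C /\
  forall (d : measure_display) (X : measurableType d)
    (PX : probability X R) (estar : X -> R)
    (mu : bool -> X -> probability R R) (qstar : bool -> X -> R),
    (forall x, 0 <= estar x <= 1) ->
    (* continuous (atomless) conditional distributions of Y | X=x, A=a *)
    (forall a x (y : R), mu a x [set y] = 0%E) ->
    (* q*_a(x) solves the moment equation, i.e. is the tau-quantile *)
    (forall a x, condmom mu tau a x (qstar a x) = 0) ->
    (* J*_a(x) exists and is invertible *)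
    (forall a x, derivable (condmom mu tau a x) (qstar a x) 1 /\
                 Jstar mu tau qstar a x != 0) ->
    (forall a x, alpha_star mu tau qstar a x = - (f_star mu qstar a x)^-1) /\
    (forall (e : X -> R) (q f : bool -> X -> R) (z : X * bool * R),
        psi tau e (fun a x => - (f a x)^-1) q z = psi_cqte tau e q f z) /\
    (forall Xi (c1 c2 c3 c4 c5 : R) (G H : bool),
      boundedness mu tau estar qstar Xi c1 c2 c3 c4 c5 G H ->
      forall (K : nat) (ehat : 'I_K -> X -> R) (qhat fhat : 'I_K -> bool -> X -> R),
      (2 <= K)%N ->
      (forall k, Xi (ehat k, (fun a x => - (fhat k a x)^-1), qhat k)) ->
      (\sum_(k < K)
          nuis_err PX G H estar (alpha_star mu tau qstar) qstar
            (ehat k) (fun a x => - (fhat k a x)^-1)%R (qhat k)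
       <= C%:E * \sum_(k < K) \sum_(a : bool)
            (L2 PX (qhat k a \- qstar a)%R *
             (L2 PX (ehat k \- estar)%R
              + L2 PX ((fun x => (fhat k a x)^-1) \- (fun x => (f_star mu qstar a x)^-1))%R
              + L2 PX (qhat k a \- qstar a)%R)))%E).
Proof.
exists 1; split => // d X PX estar mu qstar _ _ _ hJ.
have alphaE a x := alpha_starE mu tau qstar a x (hJ a x).1.
split; first exact: alphaE.
split=> [e q f z|]; first exact: psi_quantileE.
move=> Xi c1 c2 c3 c4 c5 G H _ K ehat qhat fhat _ _.
rewrite mul1e; apply: lee_sum => k _.
apply: le_trans; first exact: nuis_err_le.
apply: lee_sum => a _.
suff -> : (fun x => - (fhat k a x)^-1) \- alpha_star mu tau qstar a =
          \- ((fun x => (fhat k a x)^-1) \- (fun x => (f_star mu qstar a x)^-1)).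
  by rewrite L2N.
by apply: funext => x /=; rewrite alphaE opprD opprK.
Qed.
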